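(* Let $r\geq 0$ and $k$ be integers, and let $n,m$ be integers with $n-1\geq m\geq 1$. Then \begin{align*} \sum_{l=0}^{n-m}\binom{n}{l}S_{1}(n-l,m)\tilde{A}_{l}^{(r,k)} &=r\sum_{l=0}^{n-m-1}\sum_{a=0}^{n-l-m-1}\frac{(-1)^{a+1}a!}{a+2}\binom{n-1}{l+m}\binom{n-l-m-1}{a}S_{1}(l+m,m)\tilde{A}_{n-l-m-a-1}^{(r+1,k)}\\ &\quad +\sum_{l=0}^{n-m-1}\frac{1}{n-l-m}\binom{n-1}{l+m}S_{1}(l+m,m)\left(\tilde{A}_{n-l-m}^{(r+1,k-1)}-\tilde{A}_{n-l-m}^{(r+1,k)}\right)\\ &\quad +\sum_{l=0}^{n-m}\binom{n-1}{l+m-1}S_{1}(l+m-1,m-1)\tilde{A}_{n-l-m}^{(r,k)}(-1). \end{align*}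
   Context: For $k\in\mathbf{Z}$, $Lif_{k}(x)=\sum_{m=0}^{\infty}\frac{x^{m}}{m!(m+1)^{k}}$. For integers $r\geq 0$, $k\in\mathbf{Z}$, the polynomials $\tilde{A}_{n}^{(r,k)}(x)$ are defined by \[\left(\frac{t}{(1+t)\log(1+t)}\right)^{r}Lif_{k}\left(-\log(1+t)\right)(1+t)^{x}=\sum_{n=0}^{\infty}\tilde{A}_{n}^{(r,k)}(x)\frac{t^{n}}{n!},\] and $\tilde{A}_{n}^{(r,k)}=\tilde{A}_{n}^{(r,k)}(0)$. $S_{1}(n,m)$ denotes the signed Stirling numbers of the first kind, defined by $x(x-1)\cdots(x-n+1)=\sum_{m=0}^{n}S_{1}(n,m)x^{m}$. *)

From mathcomp Require Import all_boot all_order all_algebra.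
Set Implicit Arguments. Unset Strict Implicit. Unset Printing Implicit Defensive.
Import Order.TTheory GRing.Theory Num.Theory.
Local Open Scope ring_scope.

Section FPS.
Variable R : numFieldType.

Definition fps := nat -> R.

Definition fps_mul (a b : fps) : fps :=
  fun n => \sum_(i < n.+1) a i * b (n - i)%N.

Definition fps_one : fps := fun n => if n == 0%N then 1 else 0.

Fixpoint fps_pow (a : fps) (m : nat) : fps :=
  if m is m'.+1 then fps_mul a (fps_pow a m') else fps_one.

Fixpoint fps_inv_list (a : fps) (n : nat) : seq R :=
  if n is n'.+1 then
    let s := fps_inv_list a n' in
    rcons s (- (a 0%N)^-1 * \sum_(i < n'.+1) a (n'.+1 - i)%N * nth 0 s i)
  else [:: (a 0%N)^-1].

Definition fps_inv (a : fps) : fps := fun n => nth 0 (fps_inv_list a n) n.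

(* composition c(u(t)) for u with zero constant term *)
Definition fps_comp (c u : fps) : fps :=
  fun n => \sum_(j < n.+1) c j * fps_pow u j n.

Definition fps_log1p : fps :=
  fun n => if n == 0%N then 0 else (-1) ^+ n.+1 / n%:R.

Definition fps_1pt : fps := fun n => if (n <= 1)%N then 1 else 0.

Definition fps_log1p_div_t : fps := fun n => fps_log1p n.+1.

(* (1+t)^x = sum_n x(x-1)...(x-n+1)/n! t^n *)
Definition fps_binom (x : R) : fps :=
  fun n => (\prod_(i < n) (x - i%:R)) / n`!%:R.

(* Lif_k(u) = sum_m u^m / (m! (m+1)^k) : coefficient sequence *)
Definition Lif_coef (k : int) : fps :=
  fun m => (m`!%:R * (m.+1%:R ^ k))^-1.

(* generating function (t/((1+t)log(1+t)))^r Lif_k(-log(1+t)) (1+t)^x *)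
Definition Atilde_gf (r : nat) (k : int) (x : R) : fps :=
  fps_mul
    (fps_mul (fps_pow (fps_inv (fps_mul fps_1pt fps_log1p_div_t)) r)
             (fps_comp (Lif_coef k) (fun n => - fps_log1p n)))
    (fps_binom x).

Definition Atilde (r : nat) (k : int) (n : nat) (x : R) : R :=
  n`!%:R * Atilde_gf r k x n.

End FPS.

Definition S1 (n m : nat) : int :=
  (\prod_(i < n) ('X - (i%:R)%:P) : {poly int})`_m.

From HB Require Import structures.
From mathcomp Require Import all_boot all_order all_algebra.
From mathcomp Require Import boolp ring zify.
Set Implicit Arguments. Unset Strict Implicit. Unset Printing Implicit Defensive.
Import Order.TTheory GRing.Theory Num.Theory.
Local Open Scope ring_scope.

(* With s_m = log(1+t)^m/m! = sum_j S1(j,m) t^j/j! and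
   G = (t/((1+t)log(1+t)))^r Lif_k(-log(1+t)), the left-hand side is the n-th
   exponential coefficient of s_m G, i.e. the (n-1)-th one of (s_m G)'. The
   product rule splits this derivative into three terms, one per sum on the
   right:
   - the prefactor P = t/((1+t)log(1+t)) satisfies P' = -P^2 M' with M = 1/P,
     and the coefficients of -M' are (-1)^(a+1)/(a+2);
   - x Lif_k'(x) = Lif_(k-1)(x) - Lif_k(x), so t times the derivative of
     P^r Lif_k(-log(1+t)) is P^(r+1) (Lif_(k-1) - Lif_k)(-log(1+t));
   - (1+t) s_m' = s_(m-1), and (1+t)^(-1) is the specialisation x = -1. *)

Lemma natr_fact_neq0 (R : numDomainType) n : (n`!%:R : R) != 0.
Proof. by rewrite pnatr_eq0 -lt0n fact_gt0. Qed.

Section PowerSeriesRing.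
Variable R : numFieldType.
Implicit Types (a b c d u : fps R) (p q : {poly R}).

(* The ring laws of the Cauchy product are checked on polynomial truncations. *)
Definition fps_trunc N a : {poly R} := \poly_(i < N) a i.

Lemma fps_mul_trunc N a b n :
  (n < N)%N -> fps_mul a b n = (fps_trunc N a * fps_trunc N b)`_n.
Proof.
move=> ltnN; rewrite coefM; apply: eq_bigr => i _.
rewrite !coef_poly (leq_ltn_trans _ ltnN) ?(leq_ltn_trans (leq_subr _ _) ltnN) //.
by rewrite -ltnS.
Qed.

Lemma coefMl_low N p p' : (forall i, (i < N)%N -> p`_i = p'`_i) ->
  forall q n, (n < N)%N -> (p * q)`_n = (p' * q)`_n.
Proof.
move=> eq_pp' q n ltnN; rewrite !coefM; apply: eq_bigr => i _.
by rewrite eq_pp' // (leq_ltn_trans _ ltnN) // -ltnS.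
Qed.

Lemma fps_mulC a b : fps_mul a b = fps_mul b a.
Proof. by apply: funext => n; rewrite !(fps_mul_trunc _ _ (ltnSn n)) mulrC. Qed.

Lemma fps_mulA a b c : fps_mul a (fps_mul b c) = fps_mul (fps_mul a b) c.
Proof.
apply: funext => n; have ltnN := ltnSn n.
have trunc_mul x y i : (i < n.+1)%N ->
    (fps_trunc n.+1 (fps_mul x y))`_i = (fps_trunc n.+1 x * fps_trunc n.+1 y)`_i.
  by move=> ltin; rewrite coef_poly ltin (fps_mul_trunc _ _ ltin).
rewrite !(fps_mul_trunc _ _ ltnN) mulrC (coefMl_low (trunc_mul b c)) // mulrC.
by rewrite (coefMl_low (trunc_mul a b)) // mulrA.
Qed.

Definition fps_add a b : fps R := fun n => a n + b n.
Definition fps_opp a : fps R := fun n => - a n.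
Definition fps_zero : fps R := fun=> 0.

Lemma fps_addA : associative fps_add.
Proof. by move=> a b c; apply: funext => n; apply: addrA. Qed.
Lemma fps_addC : commutative fps_add.
Proof. by move=> a b; apply: funext => n; apply: addrC. Qed.
Lemma fps_add0 : left_id fps_zero fps_add.
Proof. by move=> a; apply: funext => n; apply: add0r. Qed.
Lemma fps_addN : left_inverse fps_zero fps_opp fps_add.
Proof. by move=> a; apply: funext => n; apply: addNr. Qed.

HB.instance Definition _ := gen_eqMixin (fps R).
HB.instance Definition _ := gen_choiceMixin (fps R).
HB.instance Definition _ :=
  GRing.isZmodule.Build (fps R) fps_addA fps_addC fps_add0 fps_addN.

Lemma fps_coefD a b n : (a + b) n = a n + b n. Proof. by []. Qed.
Lemma fps_coefN a n : (- a) n = - a n. Proof. by []. Qed.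

Lemma fps_mul1 : left_id (fps_one R) (@fps_mul R).
Proof.
move=> a; apply: funext => n; rewrite /fps_mul big_ord_recl /= mul1r subn0.
by rewrite big1 ?addr0 // => i _; rewrite mul0r.
Qed.

Lemma fps_mulDl : left_distributive (@fps_mul R) (@GRing.add (fps R)).
Proof.
move=> a b c; apply: funext => n; rewrite fps_coefD /fps_mul -big_split.
by apply: eq_bigr => i _; rewrite fps_coefD mulrDl.
Qed.

HB.instance Definition _ :=
  GRing.Zmodule_isComPzRing.Build (fps R) fps_mulA fps_mulC fps_mul1 fps_mulDl.

Lemma fps_mulE a b : a * b = fps_mul a b. Proof. by []. Qed.

Lemma fps_coef1 n : (1 : fps R) n = (n == 0)%:R. Proof. by case: n. Qed.

Lemma fps_powE a j : fps_pow a j = a ^+ j.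
Proof. by elim: j => // j IHj; rewrite exprS -IHj. Qed.

Lemma fps_coef_natM (r : nat) a n : (r%:R * a) n = r%:R * a n.
Proof.
by elim: r => [|r IHr]; rewrite ?mul0r // -!natr1 !mulrDl fps_coefD IHr !mul1r.
Qed.

Definition fps_X : fps R := fun n => (n == 1)%:R.

Lemma fps_coefXM a n : (fps_X * a) n = if n is n'.+1 then a n' else 0.
Proof.
rewrite fps_mulE /fps_mul big_ord_recl mul0r add0r.
case: n => [|n]; first by rewrite big_ord0.
rewrite big_ord_recl /= mul1r subSS subn0 big1 ?addr0 // => i _.
by rewrite mul0r.
Qed.

Lemma fps_coefXnM j a n :
  (fps_X ^+ j * a) n = if (n < j)%N then 0 else a (n - j)%N.
Proof.
elim: j a n => [|j IHj] a n; first by rewrite expr0 mul1r subn0.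
by rewrite exprS -mulrA fps_coefXM; case: n.
Qed.

Definition fps_deriv a : fps R := fun n => n.+1%:R * a n.+1.

Lemma fps_derivN a : fps_deriv (- a) = - fps_deriv a.
Proof. by apply: funext => n; apply: mulrN. Qed.

Lemma fps_deriv1 : fps_deriv 1 = 0.
Proof. by apply: funext => n; apply: mulr0. Qed.

Lemma fps_derivM a b : fps_deriv (a * b) = fps_deriv a * b + a * fps_deriv b.
Proof.
apply: funext => n; rewrite fps_coefD {1}/fps_deriv !fps_mulE.
rewrite !(fps_mul_trunc (N := n.+2)) //.
have trunc_deriv c i : (i < n.+1)%N ->
    (fps_trunc n.+2 c)^`()`_i = (fps_trunc n.+2 (fps_deriv c))`_i.
  move=> ltin; have ltin2 : (i < n.+2)%N by rewrite ltnS ltnW.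
  by rewrite coef_deriv !coef_poly ltnS ltin ltin2 /fps_deriv mulr_natl.
rewrite mulr_natl -coef_deriv derivM coefD (coefMl_low (trunc_deriv a)) //.
by congr (_ + _); rewrite mulrC [in RHS]mulrC; apply: coefMl_low (trunc_deriv b) _ _ _.
Qed.

Lemma fps_deriv_exp u j : fps_deriv (u ^+ j.+1) = j.+1%:R * (u ^+ j * fps_deriv u).
Proof.
elim: j => [|j IHj]; first by rewrite expr1 expr0 !mul1r.
by rewrite exprS fps_derivM IHj -[j.+2%:R]natr1 exprS; ring.
Qed.

Lemma fps_1ptE : fps_1pt R = 1 + fps_X.
Proof. by apply: funext => -[|[|n]]; rewrite fps_coefD /= ?addr0 ?add0r. Qed.

Lemma fps_log1pE : fps_log1p R = fps_X * fps_log1p_div_t R.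
Proof. by apply: funext => n; rewrite fps_coefXM; case: n. Qed.

Lemma fps_binom0 : fps_binom (0 : R) = 1.
Proof.
apply: funext => -[|n]; first by rewrite /fps_binom big_ord0 divr1.
by rewrite /fps_binom big_ord_recl subr0 !mul0r.
Qed.

Lemma fps_coef_binomN1 n : fps_binom (-1 : R) n = (-1) ^+ n.
Proof.
have prodN1 : \prod_(i < n) (-1 - i%:R : R) = (-1) ^+ n * n`!%:R.
  elim: n => [|n IHn]; first by rewrite big_ord0 mul1r.
  by rewrite big_ord_recr /= IHn factS natrM exprS -natr1; ring.
by rewrite /fps_binom prodN1 mulfK ?natr_fact_neq0.
Qed.

Lemma fps_1pt_binomN1 : (1 + fps_X) * fps_binom (-1 : R) = 1.
Proof.
apply: funext => n; rewrite mulrDl mul1r fps_coefD fps_coefXM fps_coef1.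
by case: n => [|n]; rewrite !fps_coef_binomN1 ?addr0 // exprS mulN1r addNr.
Qed.

Lemma fps_deriv_log1p : fps_deriv (fps_log1p R) = fps_binom (-1 : R).
Proof.
apply: funext => n; rewrite /fps_deriv fps_coef_binomN1 /fps_log1p /=.
by rewrite !exprS mulrCA mulfV ?pnatr_eq0 // mulr1 mulrA mulrNN !mul1r.
Qed.

Lemma size_fps_inv_list a n : size (fps_inv_list a n) = n.+1.
Proof. by elim: n => //= n IHn; rewrite size_rcons IHn. Qed.

Lemma nth_fps_inv_list a n i : (i <= n)%N -> nth 0 (fps_inv_list a n) i = fps_inv a i.
Proof.
elim: n => [|n IHn]; first by rewrite leqn0 => /eqP ->.
rewrite leq_eqVlt => /predU1P[-> //|ltin].
by rewrite /= nth_rcons size_fps_inv_list ltin IHn.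
Qed.

Lemma fps_invS a n :
  fps_inv a n.+1 = - (a 0%N)^-1 * \sum_(i < n.+1) a (n.+1 - i)%N * fps_inv a i.
Proof.
rewrite {1}/fps_inv /= nth_rcons size_fps_inv_list ltnn eqxx.
by congr (_ * _); apply: eq_bigr => i _; rewrite nth_fps_inv_list // -ltnS.
Qed.

Lemma fps_mulVf a : a 0%N != 0 -> fps_inv a * a = 1.
Proof.
move=> a0_neq0; apply: funext => -[|n]; rewrite fps_coef1 fps_mulE /fps_mul.
  by rewrite big_ord1 /fps_inv mulVf.
rewrite big_ord_recr /= subnn fps_invS.
under eq_bigr do rewrite mulrC.
by field.
Qed.

Lemma fps_coef_exp_lt u j n : u 0%N = 0 -> (n < j)%N -> (u ^+ j) n = 0.
Proof.
move=> u0 ltnj; have -> : u = fps_X * (fun n => u n.+1).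
  by apply: funext => -[|i]; rewrite fps_coefXM.
by rewrite exprMn fps_coefXnM ltnj.
Qed.

Lemma fps_compE c u N n : u 0%N = 0 -> (n <= N)%N ->
  fps_comp c u n = \sum_(j < N.+1) c j * (u ^+ j) n.
Proof.
move=> u0 lenN; rewrite /fps_comp; under eq_bigr do rewrite fps_powE.
rewrite (big_ord_widen _ (fun j => c j * (u ^+ j) n) (lenN : (n.+1 <= N.+1)%N)).
rewrite big_mkcond /=; apply: eq_bigr => j _; case: ltnP => // lenj.
by rewrite fps_coef_exp_lt ?mulr0.
Qed.

Lemma fps_deriv_comp c u : u 0%N = 0 ->
  fps_deriv (fps_comp c u) = fps_comp (fps_deriv c) u * fps_deriv u.
Proof.
move=> u0; apply: funext => n.
rewrite {1}/fps_deriv (fps_compE c (N := n.+1) u0) // mulr_sumr big_ord_recl.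
rewrite expr0 fps_coef1 !mulr0 add0r fps_mulE /fps_mul.
under [RHS]eq_bigr => i _ do rewrite (fps_compE _ (N := n) u0 (ltn_ord i)) mulr_suml.
rewrite exchange_big /=; apply: eq_bigr => j _.
rewrite /bump leq0n add1n mulrCA.
have -> : n.+1%:R * (u ^+ j.+1) n.+1 = fps_deriv (u ^+ j.+1) n by [].
rewrite fps_deriv_exp fps_coef_natM fps_mulE /fps_mul !mulr_sumr.
by apply: eq_bigr => i _; rewrite /fps_deriv; ring.
Qed.

Lemma fps_compB c c' u : fps_comp c' u - fps_comp c u = fps_comp (c' - c) u.
Proof.
apply: funext => n; rewrite fps_coefD fps_coefN /fps_comp -sumrB.
by apply: eq_bigr => j _; rewrite fps_coefD fps_coefN mulrBl.
Qed.

Lemma fps_compXM d u : u 0%N = 0 -> fps_comp (fps_X * d) u = u * fps_comp d u.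
Proof.
move=> u0; apply: funext => n.
rewrite (fps_compE _ (N := n.+1) u0) // big_ord_recl fps_coefXM mul0r add0r.
rewrite [in RHS]fps_mulE /fps_mul.
under [RHS]eq_bigr do rewrite (fps_compE _ (N := n) u0 (leq_subr _ n)) mulr_sumr.
rewrite exchange_big /=; apply: eq_bigr => j _.
rewrite /bump leq0n add1n fps_coefXM exprS fps_mulE /fps_mul mulr_sumr.
by apply: eq_bigr => i _; ring.
Qed.

Lemma Lif_coef_pred (k : int) :
  Lif_coef R (k - 1) - Lif_coef R k = fps_X * fps_deriv (Lif_coef R k).
Proof.
apply: funext => n; rewrite fps_coefD fps_coefN fps_coefXM /Lif_coef.
case: n => [|n]; first by rewrite !exp1rz subrr.
have n2_neq0 : (n.+2%:R : R) != 0 by rewrite pnatr_eq0.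
have n2k_neq0 : (n.+2%:R : R) ^ k != 0 by rewrite expfz_neq0.
rewrite /fps_deriv expfzDr // exprN1.
move: n2_neq0 n2k_neq0; rewrite -!natr1 => n2_neq0 n2k_neq0.
by field; rewrite natr_fact_neq0 n2_neq0 n2k_neq0.
Qed.

End PowerSeriesRing.

Lemma S1_0S m : S1 0 m.+1 = 0.
Proof. by rewrite /S1 big_ord0 coef1. Qed.

Lemma S1SS n m : S1 n.+1 m.+1 = S1 n m - S1 n m.+1 *+ n.
Proof. by rewrite /S1 big_ord_recr /= mulrBr coefB coefMX coefMC mulr_natr. Qed.

Lemma S1_eq0 j m : (j < m)%N -> S1 j m = 0.
Proof.
case: m => // m; elim: j m => [|j IHj] m; first by rewrite S1_0S.
by case: m => // m lt_jm; rewrite S1SS !IHj ?mul0rn ?subr0 // ltnW.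
Qed.

Section ExponentialCoefficients.
Variable R : numFieldType.
Implicit Types a b : fps R.

Definition egf a n : R := n`!%:R * a n.

Lemma egfD a b n : egf (a + b) n = egf a n + egf b n.
Proof. exact: mulrDr. Qed.

Lemma egfB a b n : egf (a - b) n = egf a n - egf b n.
Proof. exact: mulrBr. Qed.

Lemma egf_natM (r : nat) a n : egf (r%:R * a) n = r%:R * egf a n.
Proof. by rewrite /egf fps_coef_natM mulrCA. Qed.

Lemma egf_deriv a n : egf (fps_deriv a) n = egf a n.+1.
Proof. by rewrite /egf /fps_deriv mulrA -natrM mulnC. Qed.

Lemma egf_XM a n : egf (fps_X R * a) n.+1 = n.+1%:R * egf a n.
Proof. by rewrite /egf fps_coefXM factS natrM mulrA. Qed.

Lemma egfM a b n :
  egf (a * b) n = \sum_(0 <= i < n.+1) 'C(n, i)%:R * egf a i * egf b (n - i).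
Proof.
rewrite /egf fps_mulE /fps_mul big_mkord mulr_sumr; apply: eq_bigr => i _.
by rewrite -(bin_fact (leq_ord i)) !natrM; ring.
Qed.

Definition stirling1_egf m : fps R := fun j => (S1 j m)%:~R / j`!%:R.

Lemma egf_stirling1 m j : egf (stirling1_egf m) j = (S1 j m)%:~R.
Proof. by rewrite /egf /stirling1_egf mulrC divfK ?natr_fact_neq0. Qed.

Lemma stirling1_egf_deriv m :
  (1 + fps_X R) * fps_deriv (stirling1_egf m.+1) = stirling1_egf m.
Proof.
apply: funext => n; rewrite mulrDl mul1r fps_coefD fps_coefXM.
rewrite /fps_deriv /stirling1_egf.
rewrite S1SS rmorphB rmorphMn /=.
case: n => [|n]; first by rewrite mulr0n subr0 addr0 !divr1 mul1r.
rewrite -mulr_natl (factS n.+1) natrM.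
have := natr_fact_neq0 R n.+1; have : (n.+2%:R : R) != 0 by rewrite pnatr_eq0.
by rewrite -!natr1 => n2_neq0 fact_n1_neq0; field; rewrite fact_n1_neq0 n2_neq0.
Qed.

Lemma fps_deriv_stirling1_egf m :
  fps_deriv (stirling1_egf m.+1) = stirling1_egf m * fps_binom (-1 : R).
Proof. by rewrite -(stirling1_egf_deriv m) mulrAC fps_1pt_binomN1 mul1r. Qed.

Lemma egf_stirling1M n m b : (m <= n)%N ->
  egf (stirling1_egf m * b) n =
  \sum_(0 <= l < (n - m).+1) 'C(n, l + m)%:R * (S1 (l + m) m)%:~R * egf b (n - (l + m)).
Proof.
move=> le_mn; rewrite egfM.
rewrite (big_cat_nat (leq0n m)) ?leqW //= big_nat big1 ?add0r => [|i /andP[_ lt_im]].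
  rewrite -{1}[m]add0n big_addn subSn //.
  by apply: eq_bigr => l _; rewrite egf_stirling1.
by rewrite egf_stirling1 S1_eq0 // mulr0 mul0r.
Qed.

Lemma egf_stirling1M_rev n m b : (m <= n)%N ->
  egf (stirling1_egf m * b) n =
  \sum_(0 <= l < (n - m).+1) 'C(n, l)%:R * (S1 (n - l) m)%:~R * egf b l.
Proof.
move=> le_mn; rewrite mulrC egfM.
rewrite (big_cat_nat (leq0n (n - m).+1)) ?ltnS ?leq_subr //= [X in _ + X]big_nat.
rewrite [X in _ + X]big1 ?addr0 => [|i /andP[lt_nmi lt_in]].
  by apply: eq_bigr => l _; rewrite egf_stirling1 mulrAC.
by rewrite egf_stirling1 S1_eq0 ?mulr0 //; lia.
Qed.

End ExponentialCoefficients.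

Section GeneratingFunction.
Variable R : numFieldType.
Local Notation X := (fps_X R).
Local Notation B := (fps_binom (-1 : R)).

Definition Mlog : fps R := fps_mul (fps_1pt R) (fps_log1p_div_t R).
Definition Plog : fps R := fps_inv Mlog.
Definition neg_log1p : fps R := fun n => - fps_log1p R n.
Definition Lif_neg_log1p (k : int) : fps R := fps_comp (Lif_coef R k) neg_log1p.
Definition Agf (r : nat) (k : int) : fps R := Plog ^+ r * Lif_neg_log1p k.

Lemma Atilde_gfE r k x : Atilde_gf r k x = Agf r k * fps_binom x.
Proof. by rewrite /Atilde_gf fps_powE. Qed.

Lemma Plog_Mlog : Plog * Mlog = 1.
Proof.
apply: fps_mulVf; rewrite /Mlog /fps_mul big_ord1 /fps_log1p_div_t /fps_log1p /=.
by rewrite mul1r expr2 mulN1r opprK divr1 oner_neq0.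
Qed.

Lemma MlogE : Mlog = (1 + X) * fps_log1p_div_t R.
Proof. by rewrite -fps_1ptE. Qed.

Lemma Plog_log1p_div_t : Plog * fps_log1p_div_t R = B.
Proof.
rewrite -[LHS]mulr1 -fps_1pt_binomN1 mulrA [_ * (1 + X)]mulrAC -mulrA -MlogE.
by rewrite Plog_Mlog mul1r.
Qed.

Lemma coef_deriv_Mlog a : fps_deriv Mlog a = (-1) ^+ a / a.+2%:R.
Proof.
rewrite MlogE mulrDl mul1r /fps_deriv fps_coefD fps_coefXM.
rewrite /fps_log1p_div_t /fps_log1p /= !exprS.
have : (a.+1%:R : R) != 0 by rewrite pnatr_eq0.
have : (a.+2%:R : R) != 0 by rewrite pnatr_eq0.
by rewrite -!natr1 => a2_neq0 a1_neq0; field; rewrite a1_neq0 a2_neq0.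
Qed.

Lemma egf_neg_deriv_Mlog a :
  egf (- fps_deriv Mlog) a = (-1) ^+ a.+1 * a`!%:R / (a + 2)%:R.
Proof. by rewrite /egf fps_coefN coef_deriv_Mlog addn2 exprS; ring. Qed.

Lemma fps_deriv_Plog : fps_deriv Plog = - (Plog ^+ 2 * fps_deriv Mlog).
Proof.
have : fps_deriv Plog * Mlog + Plog * fps_deriv Mlog = 0.
  by rewrite -fps_derivM Plog_Mlog fps_deriv1.
move/eqP; rewrite addr_eq0 => /eqP dPM.
by rewrite -[LHS]mulr1 -Plog_Mlog mulrCA dPM; ring.
Qed.

Lemma fps_deriv_Plog_exp r :
  fps_deriv (Plog ^+ r) = - (r%:R * (Plog ^+ r.+1 * fps_deriv Mlog)).
Proof.
case: r => [|r]; first by rewrite expr0 fps_deriv1 !mul0r oppr0.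
by rewrite fps_deriv_exp fps_deriv_Plog !exprS; ring.
Qed.

Lemma neg_log1p0 : neg_log1p 0%N = 0.
Proof. exact: oppr0. Qed.

Lemma fps_deriv_Lif_neg_log1p k :
  fps_deriv (Lif_neg_log1p k) = - (fps_comp (fps_deriv (Lif_coef R k)) neg_log1p * B).
Proof.
rewrite /Lif_neg_log1p (fps_deriv_comp _ neg_log1p0) -mulrN; congr (_ * _).
by rewrite (_ : neg_log1p = - fps_log1p R) // fps_derivN fps_deriv_log1p.
Qed.

Lemma fps_XM_deriv_Agf r k :
  X * (Plog ^+ r * fps_deriv (Lif_neg_log1p k)) = Agf r.+1 (k - 1) - Agf r.+1 k.
Proof.
have Lif_pred : Lif_neg_log1p (k - 1) - Lif_neg_log1p k =
    neg_log1p * fps_comp (fps_deriv (Lif_coef R k)) neg_log1p.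
  by rewrite /Lif_neg_log1p fps_compB Lif_coef_pred fps_compXM // neg_log1p0.
rewrite /Agf -mulrBr Lif_pred fps_deriv_Lif_neg_log1p.
set C := fps_comp _ _; rewrite (_ : neg_log1p = - (X * fps_log1p_div_t R)).
  by rewrite -Plog_log1p_div_t exprS; ring.
by rewrite -fps_log1pE.
Qed.

Lemma fps_deriv_stirling1_Agf m r k :
  fps_deriv (stirling1_egf R m.+1 * Agf r k) =
  stirling1_egf R m * (Agf r k * B)
  + r%:R * (stirling1_egf R m.+1 * (- fps_deriv Mlog * Agf r.+1 k))
  + stirling1_egf R m.+1 * (Plog ^+ r * fps_deriv (Lif_neg_log1p k)).
Proof.
rewrite fps_derivM fps_deriv_stirling1_egf /Agf fps_derivM fps_deriv_Plog_exp.
by rewrite exprS; ring.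
Qed.

End GeneratingFunction.

Section CoefficientSums.
Variable R : numFieldType.
Implicit Types b c y : fps R.

Lemma egf_stirling1M_deriv_Mlog n m b : (m < n)%N ->
  egf (stirling1_egf R m * (- fps_deriv (Mlog R) * b)) (n - 1) =
  \sum_(0 <= l < n - m) \sum_(0 <= a < n - l - m)
    ((-1) ^+ a.+1 * a`!%:R / (a + 2)%:R) * 'C(n - 1, l + m)%:R
    * 'C(n - l - m - 1, a)%:R * (S1 (l + m) m)%:~R * egf b (n - l - m - a - 1).
Proof.
move=> lt_mn; rewrite egf_stirling1M; last lia.
rewrite (_ : (n - 1 - m).+1 = n - m)%N; last lia.
apply: eq_big_nat => l /andP[_ lt_l]; rewrite egfM mulr_sumr.
rewrite (_ : (n - 1 - (l + m)).+1 = n - l - m)%N; last lia.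
apply: eq_big_nat => a /andP[_ lt_a]; rewrite egf_neg_deriv_Mlog.
rewrite (_ : n - 1 - (l + m) = n - l - m - 1)%N; last lia.
by rewrite (_ : n - l - m - 1 - a = n - l - m - a - 1)%N; [ring | lia].
Qed.

Lemma egf_stirling1M_Xdiv n m b c y : (m < n)%N -> fps_X R * y = c - b ->
  egf (stirling1_egf R m * y) (n - 1) =
  \sum_(0 <= l < n - m) ((n - l - m)%:R)^-1 * 'C(n - 1, l + m)%:R
    * (S1 (l + m) m)%:~R * (egf c (n - l - m) - egf b (n - l - m)).
Proof.
move=> lt_mn Xy; rewrite egf_stirling1M; last lia.
rewrite (_ : (n - 1 - m).+1 = n - m)%N; last lia.
apply: eq_big_nat => l /andP[_ lt_l].
rewrite -egfB -Xy (_ : n - l - m = (n - 1 - (l + m)).+1)%N; last lia.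
by rewrite egf_XM; field; rewrite addrC natr1 pnatr_eq0.
Qed.

Lemma egf_stirling1_predM n m b : (0 < m)%N -> (m <= n)%N ->
  egf (stirling1_egf R (m - 1) * b) (n - 1) =
  \sum_(0 <= l < (n - m).+1) 'C(n - 1, l + m - 1)%:R
    * (S1 (l + m - 1) (m - 1))%:~R * egf b (n - l - m).
Proof.
move=> m_gt0 le_mn; rewrite egf_stirling1M; last lia.
rewrite (_ : n - 1 - (m - 1) = n - m)%N; last lia.
apply: eq_big_nat => l _; rewrite (_ : l + (m - 1) = l + m - 1)%N; last lia.
by rewrite (_ : n - 1 - (l + m - 1) = n - l - m)%N; last lia.
Qed.

End CoefficientSums.

Theorem theorem6 (R : numFieldType) (r : nat) (k : int) (n m : nat)
  (hm1 : (1 <= m)%N) (hmn : (m <= n - 1)%N) :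
  \sum_(0 <= l < (n - m).+1)
      'C(n, l)%:R * (S1 (n - l) m)%:~R * Atilde r k l (0 : R)
  = r%:R * \sum_(0 <= l < n - m)
        \sum_(0 <= a < n - l - m)
          ((-1) ^+ a.+1 * a`!%:R / (a + 2)%:R) * 'C(n - 1, l + m)%:R
          * 'C(n - l - m - 1, a)%:R * (S1 (l + m) m)%:~R
          * Atilde r.+1 k (n - l - m - a - 1) (0 : R)
    + \sum_(0 <= l < n - m)
        ((n - l - m)%:R)^-1 * 'C(n - 1, l + m)%:R * (S1 (l + m) m)%:~R
        * (Atilde r.+1 (k - 1) (n - l - m) (0 : R) - Atilde r.+1 k (n - l - m) (0 : R))
    + \sum_(0 <= l < (n - m).+1)
        'C(n - 1, l + m - 1)%:R * (S1 (l + m - 1) (m - 1))%:~R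
        * Atilde r k (n - l - m) (-1 : R).
Proof.
have lt_mn : (m < n)%N by lia.
have Agf0 r' k' : Atilde_gf r' k' (0 : R) = Agf R r' k'.
  by rewrite Atilde_gfE fps_binom0 mulr1.
rewrite -[X in X = _]
  (egf_stirling1M_rev (Atilde_gf r k (0 : R)) (ltnW lt_mn)) Agf0.
rewrite -[X in _ = _ * X + _ + _]
  (egf_stirling1M_deriv_Mlog (Atilde_gf r.+1 k (0 : R)) lt_mn) Agf0.
rewrite -[X in _ = _ + X + _]
  (egf_stirling1M_Xdiv (y := Plog R ^+ r * fps_deriv (Lif_neg_log1p R k)) lt_mn);
  last by rewrite !Agf0 fps_XM_deriv_Agf.
rewrite -[X in _ = _ + X]
  (egf_stirling1_predM (Atilde_gf r k (-1 : R)) hm1 (ltnW lt_mn)) Atilde_gfE.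
case: m hm1 lt_mn {hmn} => // m _; case: n => // n _; rewrite !subn1 /=.
rewrite -egf_deriv fps_deriv_stirling1_Agf !egfD egf_natM.
by rewrite -addrA addrC.
Qed.
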